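(* Let $\alpha>0$, $\gamma\in(0,1)$ and let $P$ be any distribution on $\mathcal X$. Given data $x_1,\dots,x_n$ with histogram $\theta=(\theta_1,\dots,\theta_k)$, let $S=\{j:\theta_j=0\}$ and define the random vector $Z=(z_1,\dots,z_k)$ by $$z_j=\begin{cases}\theta_j & \text{if } j\in S \text{ and } 2k\le\gamma n,\\ \theta_j+\frac{2}{n\alpha}L_j & \text{otherwise,}\end{cases}$$ where $L_1,\dots,L_k$ are i.i.d. Laplace random variables with mean zero and rate one (density $\tfrac12 e^{-|x|}$), independent of the data. Then this release mechanism is $(\alpha,\gamma)$-randomly differentially private with respect to $P$.
   Context: The sample space $\mathcal X$ is partitioned into $k$ cells $B_1,\dots,B_k$; the histogram of $x_1,\dots,x_n$ is $\theta_j=\frac1n\sum_{i=1}^n\mathbf 1\{x_i\in B_j\}$. A randomized algorithm $Q_n$ assigns to each database $X\in\mathcal X^n$ a distribution $Q_n(\cdot\mid X)$ on an output space (here $\mathbb R^k$). $Q_n$ is $(\alpha,\gamma)$-randomly differentially private (RDP) with respect to $P$ if, with $X_1,\dots,X_{n+1}$ i.i.d. $\sim P$, $X=(X_1,\dots,X_{n-1},X_n)$ and $X'=(X_1,\dots,X_{n-1},X_{n+1})$, $$\mathbb P\Big(\forall \text{ measurable } B:\ e^{-\alpha}\le \tfrac{Q_n(Z\in B\mid X)}{Q_n(Z\in B\mid X')}\le e^\alpha\Big)\ge 1-\gamma,$$ the probability being over $P^{n+1}$. *)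

From HB Require Import structures.
From mathcomp Require Import all_boot all_order all_algebra.
From mathcomp Require Import all_classical all_reals all_analysis.
Set Implicit Arguments. Unset Strict Implicit. Unset Printing Implicit Defensive.
Import Order.TTheory GRing.Theory Num.Theory.
Local Open Scope classical_set_scope.
Local Open Scope ring_scope.

(* n-fold product P^n of a measure, as the iterated (Tonelli) integral:
   P^0 is the Dirac mass at the empty tuple and
   P^(m+1)(A) = \int P(dx) P^m({t | x :: t \in A}). *)
Fixpoint prod_meas d (T : measurableType d) (R : realType)
    (P : {measure set T -> \bar R}) (n : nat) : set (n.-tuple T) -> \bar R :=
  match n return set (n.-tuple T) -> \bar R with
  | 0 => fun A => (if `[< A [tuple] >] then 1 else 0)%:E
  | m.+1 => fun A =>
      (\int[P]_x @prod_meas d T R P m [set t : m.-tuple T | A [tuple of x :: t]])%E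
  end.

Definition laplace_pdf (R : realType) (x : R) : R := expR (- `|x|) / 2.

(* law of k i.i.d. Laplace(0,1) variables (L_1,...,L_k) on R^k = k.-tuple R *)
Fixpoint laplace_iid (R : realType) (k : nat) : set (k.-tuple R) -> \bar R :=
  match k return set (k.-tuple R) -> \bar R with
  | 0 => fun A => (if `[< A [tuple] >] then 1 else 0)%:E
  | m.+1 => fun A =>
      (\int[@lebesgue_measure R]_x
         ((laplace_pdf x)%:E * @laplace_iid R m [set t : m.-tuple R | A [tuple of x :: t]]))%E
  end.

(* histogram of x_1..x_n w.r.t. the partition given by cell : T -> 'I_k
   (B_j = cell^-1 j) *)
Definition histogram (T : Type) (R : realType) (k n : nat) (cell : T -> 'I_k)
    (x : n.-tuple T) (j : 'I_k) : R :=
  (count (fun y => cell y == j) x)%:R / n%:R.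

Definition release (T : Type) (R : realType) (k n : nat) (cell : T -> 'I_k)
    (alpha gamma : R) (x : n.-tuple T) (l : k.-tuple R) : k.-tuple R :=
  [tuple (let th := histogram R cell x j in
          if (th == 0) && ((2 * k)%:R <= gamma * n%:R)
          then th else th + 2 / (n%:R * alpha) * tnth l j) | j < k].

Definition release_mech (T : Type) (R : realType) (k n : nat) (cell : T -> 'I_k)
    (alpha gamma : R) (x : n.-tuple T) : set (k.-tuple R) -> \bar R :=
  fun B => @laplace_iid R k [set l | B (release cell alpha gamma x l)].

(* From (X_1,...,X_{n+1}): X = (X_1,...,X_{n-1},X_n), X' = (X_1,...,X_{n-1},X_{n+1}) *)
Definition db_X (T : Type) (n : nat) (w : n.+1.-tuple T) : n.-tuple T :=
  [tuple tnth w (widen_ord (leqnSn n) i) | i < n].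
Definition db_X' (T : Type) (n : nat) (w : n.+1.-tuple T) : n.-tuple T :=
  [tuple (if val i == n.-1 then tnth w ord_max else tnth w (widen_ord (leqnSn n) i))
  | i < n].

Definition RDP d (T : measurableType d) dY (Y : measurableType dY) (R : realType)
    (n : nat) (Q : n.-tuple T -> set Y -> \bar R) (alpha gamma : R)
    (P : probability T R) : Prop :=
  ((1 - gamma)%:E <=
   @prod_meas d T R P n.+1
     [set w | forall B : set Y, measurable B ->
        ((expR (- alpha))%:E * Q (db_X' w) B <= Q (db_X w) B)%E /\
        (Q (db_X w) B <= (expR alpha)%:E * Q (db_X' w) B)%E])%E.

(* Fix the first n - 1 records. A cell with no record among them can be empty
   in X or in X' only if X_n or X_{n+1} falls in a cell not hit by the first
   n - 1 records; for a cell of probability p this happens with probability at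
   most p (1 - p)^(n-1) <= 1/n, so when 2k <= gamma n both X_n and X_{n+1}
   fall in already occupied cells with probability at least 1 - 2k/n
   >= 1 - gamma. On that event X and X' have the same empty cells, hence the
   same suppressed coordinates, and their histograms differ by at most 2/n in
   l1 norm. Since the Laplace density satisfies f(x) <= e^|c| f(x + c), adding
   2/(n alpha) L to histograms at l1 distance 2/n changes the probability of
   any event by a factor at most e^alpha. *)

From HB Require Import structures.
From mathcomp Require Import all_boot all_order all_algebra.
From mathcomp Require Import all_classical all_reals all_analysis.
From mathcomp Require Import ring lra.
Set Implicit Arguments. Unset Strict Implicit. Unset Printing Implicit Defensive.
Import Order.TTheory GRing.Theory Num.Theory.
Import numFieldNormedType.Exports HBNNSimple.
Local Open Scope classical_set_scope.
Local Open Scope ring_scope.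

(* The sets integrated in [prod_meas] and [laplace_iid] are not known to be
   measurable, so integrals are only compared through their definition as
   suprema over simple minorants. *)
Section ge0_integral_nonmeasurable.
Local Open Scope ereal_scope.
Context d (T : measurableType d) (R : realType) (mu : {measure set T -> \bar R}).

Lemma ge0_le_integralT (f g : T -> \bar R) :
  (forall x, 0 <= f x) -> (forall x, f x <= g x) ->
  \int[mu]_x f x <= \int[mu]_x g x.
Proof.
move=> f0 fg; have g0 x : 0 <= g x := le_trans (f0 x) (fg x).
rewrite !ge0_integralTE//; apply: ereal_sup_le => _ [h hf <-].
by exists h => //= x; exact: le_trans (hf x) (fg x).
Qed.

Lemma ge0_integralZl_le (c : R) (f : T -> \bar R) :
  (0 < c)%R -> (forall x, 0 <= f x) ->
  \int[mu]_x (c%:E * f x) <= c%:E * \int[mu]_x f x.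
Proof.
move=> c0 f0; have cf0 x : 0 <= c%:E * f x by rewrite mule_ge0 ?f0 // lee_fin ltW.
rewrite !ge0_integralTE//; apply: ge_ereal_sup => _ [h hf <-].
have ci0 : (0 <= c^-1)%R by rewrite invr_ge0 ltW.
pose h' := scale_nnsfun h ci0.
have -> : sintegral mu h = c%:E * sintegral mu h'.
  by rewrite /h' sintegralrM muleA -EFinM divff ?mul1e ?gt_eqF.
apply: lee_wpmul2l; first by rewrite lee_fin ltW.
apply: ereal_sup_ubound; exists h' => //= x.
rewrite EFinM; apply: (@le_trans _ _ (c^-1%:E * (c%:E * f x))).
  by apply: lee_wpmul2l; [rewrite lee_fin|exact: hf].
by rewrite muleA -EFinM mulVf ?mul1e // gt_eqF.
Qed.

End ge0_integral_nonmeasurable.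

Section lebesgue_translation.
Context (R : realType) (c : R).

Definition translate (x : measurableTypeR R) : measurableTypeR R := (x : R) - c.

Lemma measurable_translate : measurable_fun setT translate.
Proof. by apply: measurable_realfun.measurable_funB => //; exact: measurable_cst. Qed.

Lemma lebesgue_measure_translate (A : set (measurableTypeR R)) : measurable A ->
  lebesgue_measure (translate @^-1` A) = lebesgue_measure A.
Proof.
move=> mA.
change (pushforward lebesgue_measure translate A = lebesgue_measure A).
apply/esym/lebesgue_measure_unique => //=; first exact: measurable_translate.
move=> _ _ [[a b]] _ <-; rewrite /pushforward.
have -> : translate @^-1` `]a, b]%classic = `]a + c, b + c]%classic.
  by apply/seteqP; split => x /=; rewrite !in_itv /= /translate ltrBrDr lerBlDr.
rewrite !lebesgue_measure_itv /= !lte_fin ltrD2r.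
by case: ifP => // _; rewrite -!EFinB opprD addrACA subrr addr0.
Qed.

Variable h : {nnsfun measurableTypeR R >-> R}.

Definition translate_nnsfun_fun x := h (translate x).

Lemma measurable_translate_nnsfun : measurable_fun setT translate_nnsfun_fun.
Proof. exact: measurableT_comp measurable_translate. Qed.
HB.instance Definition _ := isMeasurableFun.Build _ _ _ _ translate_nnsfun_fun
  measurable_translate_nnsfun.

Lemma finite_range_translate_nnsfun : finite_set (range translate_nnsfun_fun).
Proof. by apply: sub_finite_set (fimfunP h) => _ [x _ <-]; exists (translate x). Qed.
HB.instance Definition _ := FiniteImage.Build _ _ translate_nnsfun_fun
  finite_range_translate_nnsfun.

Lemma translate_nnsfun_ge0 x : 0 <= translate_nnsfun_fun x.
Proof. exact: fun_ge0. Qed.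
HB.instance Definition _ := isNonNegFun.Build _ _ translate_nnsfun_fun
  translate_nnsfun_ge0.

Definition translate_nnsfun : {nnsfun measurableTypeR R >-> R} :=
  translate_nnsfun_fun.

Lemma sintegral_translate :
  sintegral lebesgue_measure translate_nnsfun = sintegral lebesgue_measure h.
Proof.
rewrite /sintegral; apply: eq_fsbigr => r _; congr (_ * _)%E.
exact: (lebesgue_measure_translate (measurable_funPTI h (measurable_set1 r))).
Qed.

End lebesgue_translation.

Lemma ge0_integral_translate_le (R : realType) (c : R) (F : R -> \bar R) :
  (forall x, 0 <= F x)%E ->
  (\int[@lebesgue_measure R]_x F (x + c)%R <= \int[@lebesgue_measure R]_x F x)%E.
Proof.
move=> F0; rewrite !ge0_integralTE//; apply: ge_ereal_sup => _ [h hF <-].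
rewrite -(sintegral_translate c h); apply: ereal_sup_ubound.
exists (translate_nnsfun c h) => //= x.
by have := hF (x - c); rewrite subrK.
Qed.

Section laplace.
Context (R : realType).

Lemma laplace_pdf_ge0 (x : R) : 0 <= laplace_pdf x.
Proof. by rewrite /laplace_pdf divr_ge0 // expR_ge0. Qed.

Lemma laplace_pdf_le_translate (x c : R) :
  laplace_pdf x <= expR `|c| * laplace_pdf (x + c).
Proof.
rewrite /laplace_pdf mulrA ler_pM2r ?invr_gt0 // -expRD ler_expR.
by rewrite lerBrDl lerBlDr addrC (le_trans (ler_normD _ _)) // normrN addrC.
Qed.

Lemma laplace_iid_ge0 m (A : set (m.-tuple R)) : (0 <= laplace_iid A)%E.
Proof.
elim: m A => [|m IH] A /=; first by case: ifP => _; rewrite lee_fin.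
by apply: integral_ge0 => x _; rewrite mule_ge0 ?lee_fin ?laplace_pdf_ge0.
Qed.

Definition addt m (l c : m.-tuple R) : m.-tuple R :=
  [tuple tnth l i + tnth c i | i < m].

Lemma addt_cons m (x y : R) (l c : m.-tuple R) :
  addt [tuple of x :: l] [tuple of y :: c] = [tuple of x + y :: addt l c].
Proof.
apply: eq_from_tnth => i; rewrite tnth_mktuple.
by case: (unliftP ord0 i) => [j ->|->]; rewrite ?tnthS ?tnth_mktuple ?tnth0.
Qed.

Lemma laplace_iid_addt_le m (A : set (m.-tuple R)) (c : m.-tuple R) :
  (laplace_iid [set l | A (addt l c)] <=
   (expR (\sum_(i < m) `|tnth c i|))%:E * laplace_iid A)%E.
Proof.
elim: m A c => [|m IH] A c.
  by rewrite big_ord0 expR0 mul1e /= [addt _ _]tuple0.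
case/tupleP: c => c0 c'; rewrite big_ord_recl tnth0.
under eq_bigr do rewrite tnthS.
set S := \sum_(i < m) _; set e := expR (`|c0| + S).
pose g y := laplace_iid [set t : m.-tuple R | A [tuple of y :: t]].
pose F y := ((laplace_pdf y)%:E * g y)%E.
have F0 y : (0 <= F y)%E by rewrite mule_ge0 ?lee_fin ?laplace_pdf_ge0 ?laplace_iid_ge0.
have pointwise (x : R) : ((laplace_pdf x)%:E *
    laplace_iid [set t : m.-tuple R | A (addt [tuple of x :: t] [tuple of c0 :: c'])] <=
    e%:E * F (x + c0)%R)%E.
  under eq_set do rewrite addt_cons.
  apply: (@le_trans _ _ ((laplace_pdf x)%:E * ((expR S)%:E * g (x + c0)%R)))%E.
    apply: lee_wpmul2l; first by rewrite lee_fin laplace_pdf_ge0.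
    exact: (IH [set t : m.-tuple R | A [tuple of x + c0 :: t]] c').
  rewrite /F !muleA -!EFinM lee_wpmul2r ?laplace_iid_ge0 // lee_fin /e expRD.
  rewrite [X in _ <= X]mulrAC; apply: ler_wpM2r; first exact: expR_ge0.
  exact: laplace_pdf_le_translate.
apply: (@le_trans _ _ (\int[lebesgue_measure]_x (e%:E * F (x + c0)%R))%E).
  apply: ge0_le_integralT => [x|x]; last exact: pointwise.
  by rewrite mule_ge0 ?lee_fin ?laplace_pdf_ge0 ?laplace_iid_ge0.
apply: (@le_trans _ _ (e%:E * \int[lebesgue_measure]_x F (x + c0)%R)%E).
  by apply: ge0_integralZl_le => [|x]; [exact: expR_gt0 | exact: F0].
by rewrite lee_wpmul2l ?lee_fin ?expR_ge0 ?ge0_integral_translate_le.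
Qed.

End laplace.

Definition suppressed (T : Type) (R : realType) (k n : nat) (cell : T -> 'I_k)
    (gamma : R) (x : n.-tuple T) (j : 'I_k) : bool :=
  (histogram R cell x j == 0) && ((2 * k)%:R <= gamma * n%:R).

Section release_mechanism.
Context (R : realType) (T : Type) (k n : nat) (cell : T -> 'I_k) (alpha gamma : R).
Hypotheses (n_gt0 : (0 < n)%N) (alpha_gt0 : 0 < alpha).

Local Notation hist := (histogram R cell).

Lemma tnth_release (x : n.-tuple T) (l : k.-tuple R) j :
  tnth (release cell alpha gamma x l) j =
  if suppressed cell gamma x j then hist x j
  else hist x j + 2 / (n%:R * alpha) * tnth l j.
Proof. by rewrite tnth_mktuple. Qed.

Lemma release_mech_le (x y : n.-tuple T) (B : set (k.-tuple R)) :
  (forall j, suppressed cell gamma x j = suppressed cell gamma y j) ->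
  \sum_(j < k) `|hist y j - hist x j| <= 2 / n%:R ->
  (release_mech cell alpha gamma y B <=
   (expR alpha)%:E * release_mech cell alpha gamma x B)%E.
Proof.
move=> supp_xy l1_xy.
have n_neq0 : n%:R != 0 :> R by rewrite pnatr_eq0 -lt0n.
have nalpha_gt0 : 0 < n%:R * alpha / 2 by rewrite divr_gt0 // mulr_gt0 // ltr0n.
pose c := [tuple (hist y j - hist x j) * (n%:R * alpha / 2) | j < k].
have release_addt l :
    release cell alpha gamma y l = release cell alpha gamma x (addt l c).
  apply: eq_from_tnth => j; rewrite !tnth_release !tnth_mktuple -supp_xy.
  case: ifP => [supp_x|_]; last by field; rewrite n_neq0 gt_eqF.
  by move: (supp_x); rewrite supp_xy => /andP[/eqP -> _]; case/andP: supp_x => /eqP ->.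
rewrite /release_mech; under eq_set do rewrite release_addt.
apply: le_trans (laplace_iid_addt_le [set l | B (release cell alpha gamma x l)] c) _.
rewrite lee_wpmul2r ?laplace_iid_ge0 // lee_fin ler_expR.
under eq_bigr do rewrite tnth_mktuple normrM (gtr0_norm nalpha_gt0).
rewrite -mulr_suml; apply: le_trans (ler_wpM2r (ltW nalpha_gt0) l1_xy) _.
by rewrite le_eqVlt; apply/orP; left; apply/eqP; field.
Qed.

End release_mechanism.

Section tuple_sums.
Context (R : pzSemiRingType) (X : finType).

Lemma sum_tuple0 (F : 0.-tuple X -> R) : \sum_c F c = F [tuple].
Proof. by rewrite (big_pred1 [tuple]) // => c; apply/esym/eqP/tuple0. Qed.

Lemma sum_tupleS m (F : m.+1.-tuple X -> R) :
  \sum_c F c = \sum_x \sum_(c : m.-tuple X) F [tuple of x :: c].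
Proof.
rewrite pair_big /= (reindex (fun p : X * m.-tuple X => [tuple of p.1 :: p.2])) //=.
exists (fun t => (thead t, [tuple of behead t])) => [[x c] _|t _] /=.
  by congr pair; apply: val_inj.
by rewrite -tuple_eta.
Qed.

Lemma sum_tuple_prod m (F : nat -> X -> R) :
  \sum_(c : m.-tuple X) \prod_(i < m) F i (tnth c i) = \prod_(i < m) \sum_x F i x.
Proof.
elim: m F => [|m IH] F; first by rewrite sum_tuple0 !big_ord0.
rewrite sum_tupleS big_ord_recl mulr_suml; apply: eq_bigr => x _.
under eq_bigr do rewrite big_ord_recl tnth0.
rewrite -mulr_sumr; congr (_ * _).
under eq_bigr do under eq_bigr do rewrite tnthS.
exact: (IH (fun i => F i.+1)).
Qed.

End tuple_sums.

Section product_measure.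
Context d (T : measurableType d) (R : realType) (P : {measure set T -> \bar R}).

Lemma prod_meas_ge0 m (A : set (m.-tuple T)) : (0 <= prod_meas P A)%E.
Proof.
elim: m A => [|m IH] A /=; first by case: ifP => _; rewrite lee_fin.
by apply: integral_ge0 => x _; exact: IH.
Qed.

Lemma prod_meas_le m (A B : set (m.-tuple T)) : A `<=` B ->
  (prod_meas P A <= prod_meas P B)%E.
Proof.
elim: m A B => [|m IH] A B AB /=.
  case: (asboolP (A [tuple])) => hA; case: (asboolP (B [tuple])) => hB //.
  by case: hB; exact: AB.
apply: ge0_le_integralT => x; first exact: prod_meas_ge0.
by apply: IH => t /=; exact: AB.
Qed.

End product_measure.

Section cell_probability.
Context d (T : measurableType d) (R : realType) (P : probability T R)
  (k : nat) (cell : T -> 'I_k).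
Hypothesis measurable_cell : forall j : 'I_k, measurable (cell @^-1` [set j]).

Definition cell_prob (j : 'I_k) : R := fine (P (cell @^-1` [set j])).

Lemma cell_prob_ge0 j : 0 <= cell_prob j.
Proof. by rewrite fine_ge0. Qed.

Lemma integral_cell (h : 'I_k -> R) : (forall j, 0 <= h j) ->
  (\int[P]_x (h (cell x))%:E = (\sum_(j < k) h j * cell_prob j)%:E)%E.
Proof.
move=> h0.
have indicator_sum x : (h (cell x))%:E =
    (\sum_(j < k) (h j)%:E * (\1_(cell @^-1` [set j]) x)%:E)%E.
  rewrite (bigD1 (cell x)) //= indicE mem_set // mule1 big1 ?adde0 // => j hj.
  by rewrite indicE memNset ?mule0 //= => e; rewrite e eqxx in hj.
under eq_integral do rewrite indicator_sum.
rewrite ge0_integral_sum //; last first.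
- by move=> j x _; rewrite mule_ge0 ?lee_fin ?h0 ?indic_ge0.
- move=> j; apply/measurable_realfun.measurable_EFinP.
  apply: measurable_realfun.measurable_funM; first exact: measurable_cst.
  exact/measurable_realfun.measurable_indic.
rewrite -sumEFin; apply: eq_bigr => j _.
rewrite ge0_integralZl_EFin //; last first.
  by apply/measurable_realfun.measurable_EFinP;
    exact: measurable_realfun.measurable_indic.
by rewrite integral_indic // setIT EFinM /cell_prob fineK // fin_num_measure.
Qed.

Lemma cell_prob_sum1 : \sum_(j < k) cell_prob j = 1.
Proof.
have := @integral_cell (fun _ => 1) (fun _ => ler01).
rewrite integral_cst // mul1e [X in X = _ -> _](_ : _ = 1%E);
  last exact: probability_setT.
by under eq_bigr do rewrite mul1r; move=> [->].
Qed.

Lemma prod_meas_cell_event m (E : pred (m.-tuple 'I_k)) :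
  prod_meas P [set w : m.-tuple T | E (map_tuple cell w)] =
  (\sum_(c : m.-tuple 'I_k | E c) \prod_(i < m) cell_prob (tnth c i))%:E.
Proof.
elim: m E => [|m IH] E /=.
  rewrite big_mkcond sum_tuple0 big_ord0 [map_tuple _ _]tuple0.
  by case: (asboolP (E [tuple])) => [->|/negP/negbTE ->].
pose h j := \sum_(c : m.-tuple 'I_k | E [tuple of j :: c])
  \prod_(i < m) cell_prob (tnth c i).
transitivity (\int[P]_x (h (cell x))%:E)%E.
  apply: eq_integral => x _; rewrite -(IH (fun c => E [tuple of cell x :: c])).
  by congr prod_meas; apply/funext => t /=; congr (E _); apply: val_inj.
rewrite integral_cell; last first.
  by move=> j; apply: sumr_ge0 => c _; apply: prodr_ge0 => i _; exact: cell_prob_ge0.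
congr (_%:E); rewrite [RHS]big_mkcond sum_tupleS; apply: eq_bigr => j _.
rewrite mulrC mulr_sumr [LHS]big_mkcond; apply: eq_bigr => c _ /=.
rewrite big_ord_recl tnth0; case: ifP => _ //.
by congr (_ * _); apply: eq_bigr => i _; rewrite tnthS.
Qed.

End cell_probability.

Section bernoulli.
Context (R : realDomainType).

Lemma bernoulli_ineq (x : R) m : 0 <= x <= 1 -> (1 - x) ^+ m * (1 + m%:R * x) <= 1.
Proof.
move=> /andP[x0 x1]; elim: m => [|m IH]; first by rewrite expr0 mul0r addr0 mulr1.
apply: le_trans IH; rewrite exprS [(1 - x) * _]mulrC -mulrA.
rewrite ler_wpM2l ?exprn_ge0 ?subr_ge0 // -natr1.
have : 0 <= m%:R :> R by []; nra.
Qed.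

Lemma mulrn_miss_le1 (x : R) m : 0 <= x <= 1 -> m.+1%:R * (x * (1 - x) ^+ m) <= 1.
Proof.
move=> x01; apply: le_trans (bernoulli_ineq m x01); case/andP: x01 => x0 x1.
rewrite [X in X <= _](_ : _ = (1 - x) ^+ m * (m.+1%:R * x)); last by ring.
rewrite ler_wpM2l ?exprn_ge0 ?subr_ge0 // -natr1 mulrDl mul1r.
have : 0 <= m%:R :> R by []; nra.
Qed.

End bernoulli.

Section occupancy.
Context (R : realDomainType) (k : nat) (p : 'I_k -> R).
Hypotheses (p_ge0 : forall j, 0 <= p j) (p_sum1 : \sum_(j < k) p j = 1).

Lemma p_le1 j : p j <= 1.
Proof. by rewrite -p_sum1 (bigD1 j) //= lerDl sumr_ge0. Qed.

Lemma sum_p_neq j : \sum_x p x * (x != j)%:R = 1 - p j.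
Proof.
rewrite -[X in _ = X - _]p_sum1 (bigD1 j) //= [in RHS](bigD1 j) //= eqxx mulr0 add0r.
by rewrite addrAC subrr add0r; apply: eq_bigr => x ->; rewrite mulr1.
Qed.

Lemma sum_p_eq j : \sum_x p x * (x == j)%:R = p j.
Proof.
by rewrite (bigD1 j) //= eqxx mulr1 big1 ?addr0 // => x /negbTE ->; rewrite mulr0.
Qed.

Definition isolated n' (q : 'I_n'.+2) (c : n'.+2.-tuple 'I_k) : bool :=
  [forall i : 'I_n'.+2, (i < n')%N ==> (tnth c i != tnth c q)].

Definition tuple_prob m (c : m.-tuple 'I_k) : R := \prod_(i < m) p (tnth c i).

Lemma tuple_prob_ge0 m (c : m.-tuple 'I_k) : 0 <= tuple_prob c.
Proof. exact: prodr_ge0. Qed.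

Lemma sum_tuple_prob m : \sum_(c : m.-tuple 'I_k) tuple_prob c = 1.
Proof.
by rewrite (sum_tuple_prod m (fun _ => p)) p_sum1 prodr_const expr1n.
Qed.

Lemma prob_isolated_le n' (q : 'I_n'.+2) : (n' <= q)%N ->
  \sum_(c | isolated q c) tuple_prob c <= \sum_j p j * (1 - p j) ^+ n'.
Proof.
move=> n'_le_q.
(* Summing over the label [j] of entry [q] bounds each isolated [c] by a product of
   one-coordinate weights, so the whole sum factorizes. *)
pose G j i x := p x *
  (if (i < n')%N then (x != j)%:R else if i == q then (x == j)%:R else 1).
have G0 j i x : 0 <= G j i x by rewrite mulr_ge0 //; do 2?case: ifP.
apply: (@le_trans _ _ (\sum_(c : n'.+2.-tuple 'I_k) \sum_j
    \prod_(i < n'.+2) G j i (tnth c i))).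
  rewrite big_mkcond; apply: ler_sum => c _.
  have sum_ge0 : 0 <= \sum_j \prod_(i < n'.+2) G j i (tnth c i).
    by apply: sumr_ge0 => j _; apply: prodr_ge0.
  case: ifP => [isol|_]; last exact: sum_ge0.
  have -> : tuple_prob c = \prod_(i < n'.+2) G (tnth c q) i (tnth c i).
    apply: eq_bigr => i _; rewrite /G.
    case: ifP => i_lt; first by rewrite (implyP (forallP isol i) i_lt) mulr1.
    by case: ifP => [/eqP/val_inj ->|]; rewrite ?eqxx mulr1.
  rewrite (bigD1 (tnth c q)) //= lerDl.
  by apply: sumr_ge0 => j _; apply: prodr_ge0.
rewrite exchange_big /=; apply: ler_sum => j _.
rewrite sum_tuple_prod big_ord_recr big_ord_recr /=.
under eq_bigr => i _ do rewrite /G /= ltn_ord sum_p_neq.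
have sum_G i : (n' <= i)%N -> \sum_x G j i x = if i == q :> nat then p j else 1.
  move=> n'_le_i; rewrite /G ltnNge n'_le_i /=.
  by case: eqP => _; [exact: sum_p_eq | under eq_bigr do rewrite mulr1].
rewrite prodr_const card_ord !sum_G ?leqnSn //.
have [->|q_eq] : (q : nat) = n' \/ (q : nat) = n'.+1.
  move: (ltn_ord q); rewrite ltnS leq_eqVlt ltnS => /orP[/eqP ->|q_le]; [by right|left].
  by apply/eqP; rewrite eqn_leq q_le n'_le_q.
  by rewrite eqxx (gtn_eqF (ltnSn n')) mulr1 mulrC.
by rewrite q_eq eqxx ltn_eqF // mulr1 mulrC.
Qed.

Definition both_seen n' (c : n'.+2.-tuple 'I_k) : bool :=
  ~~ isolated (inord n') c && ~~ isolated ord_max c.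

Lemma prob_both_seen_ge n' (gamma : R) (C : bool) : 0 < gamma ->
  (C -> (2 * k)%:R <= gamma * n'.+1%:R) ->
  1 - gamma <= \sum_(c : n'.+2.-tuple 'I_k | C ==> both_seen c) tuple_prob c.
Proof.
move=> gamma_gt0; case: C => [/(_ isT) k_small|_] /=; last first.
  by rewrite sum_tuple_prob; lra.
have total : \sum_(c : n'.+2.-tuple 'I_k | both_seen c) tuple_prob c +
    \sum_(c : n'.+2.-tuple 'I_k | ~~ both_seen c) tuple_prob c = 1.
  by rewrite -(sum_tuple_prob n'.+2) [RHS](bigID (@both_seen n')).
suff : \sum_(c : n'.+2.-tuple 'I_k | ~~ both_seen c) tuple_prob c <= gamma by lra.
set S := \sum_j p j * (1 - p j) ^+ n'.
apply: (@le_trans _ _ (\sum_(c : n'.+2.-tuple 'I_k | isolated (inord n') c) tuple_prob c +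
                       \sum_(c : n'.+2.-tuple 'I_k | isolated ord_max c) tuple_prob c)).
  rewrite big_mkcond [X in _ <= X + _]big_mkcond [X in _ <= _ + X]big_mkcond.
  rewrite -big_split /=; apply: ler_sum => c _; rewrite negb_and !negbK.
  by have := tuple_prob_ge0 c; do 2!case: isolated => /=; lra.
have isol1 : \sum_(c : n'.+2.-tuple 'I_k | isolated (inord n') c) tuple_prob c <= S.
  by apply: prob_isolated_le; rewrite inordK.
have isol2 : \sum_(c : n'.+2.-tuple 'I_k | isolated ord_max c) tuple_prob c <= S.
  exact: prob_isolated_le.
have S_small : n'.+1%:R * S <= k%:R.
  rewrite /S mulr_sumr; apply: le_trans (_ : \sum_(j < k) (1 : R) <= _).
    by apply: ler_sum => j _; rewrite mulrn_miss_le1 // p_ge0 p_le1.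
  by rewrite sumr_const card_ord.
have : 0 < n'.+1%:R :> R by []; move: k_small; rewrite natrM; nra.
Qed.

End occupancy.

Lemma count_mktuple (U : Type) m (f : 'I_m -> U) (a : pred U) :
  count a [tuple f i | i < m] = (\sum_(i < m) a (f i))%N.
Proof.
rewrite /= count_map -sum1_count big_enum_cond /= big_mkcond /=.
by apply: eq_bigr => i _; case: (a (f i)).
Qed.

Lemma sum_indicator (R : pzSemiRingType) k (a : 'I_k) :
  \sum_(j < k) ((a == j)%:R : R) = 1.
Proof.
by rewrite (bigD1 a) //= eqxx big1 ?addr0 // => j; rewrite eq_sym => /negbTE ->.
Qed.

Section neighbouring_databases.
Context (R : realType) (T : Type) (k n' : nat) (cell : T -> 'I_k)
  (w : n'.+2.-tuple T).

Local Notation hist := (histogram R cell).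
Local Notation count_cell j := (count (fun y => cell y == j)).

Definition shared_count (j : 'I_k) : nat :=
  (\sum_(i < n') (cell (tnth w (widen_ord (leqnSn _) (widen_ord (leqnSn _) i))) == j))%N.

Lemma count_db_X j :
  count_cell j (db_X w) = (shared_count j + (cell (tnth w (inord n')) == j))%N.
Proof.
rewrite /db_X count_mktuple big_ord_recr /=; congr (_ + _)%N.
by congr (cell (tnth w _) == j); apply: val_inj; rewrite /= inordK.
Qed.

Lemma count_db_X' j :
  count_cell j (db_X' w) = (shared_count j + (cell (tnth w ord_max) == j))%N.
Proof.
rewrite /db_X' count_mktuple big_ord_recr /= eqxx; congr (_ + _)%N.
by apply: eq_bigr => i _; rewrite (ltn_eqF (ltn_ord i)).
Qed.

Lemma shared_count_neq0 (q : 'I_n'.+2) :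
  ~~ isolated q (map_tuple cell w) -> shared_count (cell (tnth w q)) != 0%N.
Proof.
move=> /forallPn [i]; rewrite negb_imply negbK !tnth_map => /andP[i_lt /eqP e].
rewrite /shared_count (bigD1 (Ordinal i_lt)) //=.
have -> : widen_ord (leqnSn n'.+1) (widen_ord (leqnSn n') (Ordinal i_lt)) = i.
  exact: val_inj.
by rewrite e eqxx.
Qed.

Lemma histogram_eq0 m (x : m.+1.-tuple T) j :
  (hist x j == 0) = (count_cell j x == 0%N).
Proof. by rewrite /histogram mulf_eq0 invr_eq0 !pnatr_eq0 orbF. Qed.

Lemma suppressed_db_eq (gamma : R) :
  ((2 * k)%:R <= gamma * n'.+1%:R) ==> both_seen (map_tuple cell w) ->
  forall j, suppressed cell gamma (db_X w) j = suppressed cell gamma (db_X' w) j.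
Proof.
move=> good j; rewrite /suppressed.
case: (boolP (_ <= _)) good => [_ /andP[seen seen']|_ _]; last by rewrite !andbF.
rewrite !andbT !histogram_eq0 count_db_X count_db_X' !addn_eq0.
have [shared0|] := eqVneq (shared_count j) 0%N; last by [].
have [e|] := eqVneq (cell (tnth w (inord n'))) j.
  by move: (shared_count_neq0 seen); rewrite e shared0.
have [e|] := eqVneq (cell (tnth w ord_max)) j => //.
by move: (shared_count_neq0 seen'); rewrite e shared0.
Qed.

Lemma histogram_db_l1 :
  \sum_(j < k) `|hist (db_X' w) j - hist (db_X w) j| <= 2 / n'.+1%:R.
Proof.
have diff j : hist (db_X' w) j - hist (db_X w) j =
    ((cell (tnth w ord_max) == j)%:R - (cell (tnth w (inord n')) == j)%:R) / n'.+1%:R.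
  by rewrite /histogram count_db_X count_db_X' !natrD -mulrBl; congr (_ * _); ring.
under eq_bigr do rewrite diff normrM.
rewrite -mulr_suml ger0_norm ?invr_ge0 // ler_pM2r ?invr_gt0 ?ltr0n //.
apply: le_trans (_ : \sum_(j < k) (((cell (tnth w ord_max) == j)%:R : R) +
                                   (cell (tnth w (inord n')) == j)%:R) <= _).
  by apply: ler_sum => j _; apply: le_trans (ler_normB _ _) _; rewrite !ger0_norm.
by rewrite big_split /= !sum_indicator.
Qed.

End neighbouring_databases.

Theorem proposition5p1 (R : realType) (d : measure_display) (T : measurableType d)
    (k n : nat) (cell : T -> 'I_k) (alpha gamma : R) (P : probability T R) :
  (forall j : 'I_k, measurable (cell @^-1` [set j])) ->
  (0 < n)%N -> 0 < alpha -> 0 < gamma < 1 ->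
  @RDP d T _ (k.-tuple R) R n (release_mech cell alpha gamma) alpha gamma P.
Proof.
move=> measurable_cell n_gt0 alpha_gt0 /andP[gamma_gt0 _].
case: n n_gt0 => [//|n'] n_gt0.
set C := (2 * k)%:R <= gamma * n'.+1%:R.
apply: (@le_trans _ _
  (prod_meas P [set w : n'.+2.-tuple T | C ==> both_seen (map_tuple cell w)])).
  rewrite (prod_meas_cell_event _ _ (fun c => C ==> both_seen c)) // lee_fin.
  have := prob_both_seen_ge (cell_prob_ge0 P cell) (cell_prob_sum1 P measurable_cell)
    gamma_gt0 (id : C -> C).
  by apply.
apply: prod_meas_le => w /= good B _.
have supp_eq := suppressed_db_eq good.
have l1 := histogram_db_l1 R cell w.
split.
  have e_ge0 : (0 <= (expR (- alpha))%:E)%E by rewrite lee_fin expR_ge0.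
  apply: le_trans (lee_wpmul2l e_ge0 (release_mech_le n_gt0 alpha_gt0 B supp_eq l1)) _.
  by rewrite muleA -EFinM -expRD addNr expR0 mul1e.
apply: (release_mech_le n_gt0 alpha_gt0) => [j|]; first by rewrite supp_eq.
by under eq_bigr do rewrite distrC.
Qed.
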